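(* Let $d\ge2$ and $-\frac{1}{d^2-1} \le t \le \frac{1}{d+1}$. Suppose $\{|x_i\rangle\}_{i=1}^{d^2}$ and $\{|y_i\rangle\}_{i=1}^{d^2}$ are tight, informationally complete frames of unit vectors in $\mathbb{C}^d$ such that for all $i\neq j$ $$|\langle x_i|y_j\rangle|^2 = \frac{1-t}{d}, \qquad |\langle x_i|y_i\rangle|^2 = \frac{t(d^2-1)+1}{d}.$$ Then $$\frac{1}{d^2}\sum_{i=1}^{d^2} |x_i\rangle\langle x_i| \otimes |y_i\rangle\langle y_i| = \frac{t}{d}U_{SW} + \frac{1-t}{d^2}I_{d^2}.$$
   Context: $U_{SW}$ is the swap operator on $\mathbb{C}^d\otimes\mathbb{C}^d$, $U_{SW}(|u\rangle\otimes|v\rangle)=|v\rangle\otimes|u\rangle$. A set of unit vectors $\{|x_i\rangle\}_{i=1}^n\subset\mathbb{C}^d$ is a tight frame if $\sum_i |x_i\rangle\langle x_i| = cI_d$ for some real $c\ge0$; it is informationally complete if the projectors $|x_i\rangle\langle x_i|$ span the space of all complex $d\times d$ matrices. *)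

(* Complex scalars: an arbitrary numClosedFieldType C
   (e.g. algC or the complex numbers complex R over a real closed field R). *)
From HB Require Import structures.
From mathcomp Require Import all_boot all_order all_algebra.
From mathcomp Require Export mxtens.
Set Implicit Arguments. Unset Strict Implicit. Unset Printing Implicit Defensive.
Import Order.TTheory GRing.Theory Num.Theory.
Local Open Scope ring_scope.

Section QDefs.
Variable C : numClosedFieldType.

Definition adjmx {m n} (A : 'M[C]_(m, n)) : 'M[C]_(n, m) := (map_mx Num.conj A)^T.

Definition inner {d} (x y : 'cV[C]_d) : C := (adjmx x *m y) 0 0.

Definition ketbra {d} (x : 'cV[C]_d) : 'M[C]_d := x *m adjmx x.

Definition unit_vec {d} (x : 'cV[C]_d) : Prop := inner x x = 1.

Definition tight_frame {d n} (x : 'I_n -> 'cV[C]_d) : Prop :=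
  exists c : C, c \is Num.real /\ 0 <= c /\ \sum_(i < n) ketbra (x i) = c%:M.

Definition info_complete {d n} (x : 'I_n -> 'cV[C]_d) : Prop :=
  forall M : 'M[C]_d, exists a : 'I_n -> C, M = \sum_(i < n) a i *: ketbra (x i).

(* swap operator on C^d (x) C^d, in the tensor basis of mxtens:
   U_SW |i,j> = |j,i> *)
Definition swap_mx d : 'M[C]_(d * d) :=
  \matrix_(a, b) (((mxtens_unindex a).1 == (mxtens_unindex b).2) &&
                  ((mxtens_unindex a).2 == (mxtens_unindex b).1))%:R.

Lemma swap_mxE d (u v : 'cV[C]_d) : swap_mx d *m (u *t v) = v *t u.
Proof.
apply/matrixP=> a k; case: (mxtens_indexP k) => k0 k1.
case: (mxtens_indexP a) => i j.
rewrite tensmxE mxE (bigD1 (mxtens_index (j, i))) //= big1 ?addr0.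
  rewrite tensmxE mxE !mxtens_indexK /= !eqxx mul1r [k0]ord1 [k1]ord1 mulrC.
  by [].
move=> b; case: (mxtens_indexP b) => k' l' ne.
rewrite !mxE !mxtens_indexK /=.
case: eqP => [ek|_]; last by rewrite mul0r.
case: eqP => [el|_]; last by rewrite mul0r.
by move: ne; rewrite ek el eqxx.
Qed.
End QDefs.

From HB Require Import structures.
From mathcomp Require Import all_boot all_order all_algebra.
From mathcomp Require Import mxtens ring.
Import Order.TTheory GRing.Theory Num.Theory.
Local Open Scope ring_scope.

(* Consider Phi(M) = sum_i tr(|y_i><y_i| M) |x_i><x_i|.  The (a,a') entry of
   Phi(E_{b'b}) is the ((a,b),(a',b')) entry of sum_i |x_i><x_i| (x) |y_i><y_i|,
   so it suffices to know Phi.  On a projector |x_k><x_k| the two overlap values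
   and the tight-frame identity sum_i |x_i><x_i| = d I (forced by d^2 unit
   vectors) give Phi(|x_k><x_k|) = (1 - t) I + t d |x_k><x_k|; since these
   projectors span all matrices, Phi(M) = (1 - t) tr(M) I + t d M, whose entries
   are exactly those of the identity and swap terms. *)

Set Implicit Arguments. Unset Strict Implicit.

Section Ketbra.
Variable C : numClosedFieldType.

Lemma adjmxE m n (A : 'M[C]_(m, n)) i j : adjmx A i j = (A j i)^*.
Proof. by rewrite !mxE. Qed.

Lemma innerE d (x y : 'cV[C]_d) : inner x y = \sum_k (x k 0)^* * y k 0.
Proof. by rewrite /inner mxE; apply: eq_bigr => k _; rewrite adjmxE. Qed.

Lemma ketbraE d (x : 'cV[C]_d) p q : ketbra x p q = x p 0 * (x q 0)^*.
Proof. by rewrite mxE big_ord1 adjmxE. Qed.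

Lemma inner_conj d (x y : 'cV[C]_d) : inner y x = (inner x y)^*.
Proof.
rewrite !innerE rmorph_sum; apply: eq_bigr => k _.
by rewrite rmorphM /= conjCK mulrC.
Qed.

Lemma mxtrace_ketbra d (x : 'cV[C]_d) : \tr (ketbra x) = inner x x.
Proof. by rewrite innerE; apply: eq_bigr => p _; rewrite ketbraE mulrC. Qed.

Lemma mxtrace_mul_ketbra d (x y : 'cV[C]_d) :
  \tr (ketbra y *m ketbra x) = `|inner x y| ^+ 2.
Proof.
rewrite normCK -inner_conj !innerE big_distrl; apply: eq_bigr => p _.
rewrite mxE big_distrr; apply: eq_bigr => q _; rewrite !ketbraE /=.
ring.
Qed.

Lemma mxtrace_mul_delta d (A : 'M[C]_d) i j : \tr (A *m delta_mx i j) = A j i.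
Proof.
have diagE p : (A *m delta_mx i j) p p = A p i * (p == j)%:R.
  rewrite mxE (bigD1 i) //= big1 ?addr0 => [|k /negbTE nk]; rewrite mxE.
    by rewrite eqxx andTb eq_sym.
  by rewrite nk mulr0.
rewrite /mxtrace; under eq_bigr do rewrite diagE.
rewrite (bigD1 j) //= big1 ?addr0 ?eqxx ?mulr1 // => p /negbTE ->.
by rewrite mulr0.
Qed.

Lemma mxtrace_delta d (i j : 'I_d) : \tr (delta_mx i j : 'M[C]_d) = (j == i)%:R.
Proof. by rewrite -[delta_mx _ _]mul1mx mxtrace_mul_delta mxE. Qed.

End Ketbra.

Lemma tight_frame_sum_ketbra (C : numClosedFieldType) d n
    (x : 'I_n -> 'cV[C]_d) :
  (0 < d)%N -> (forall i, unit_vec (x i)) -> tight_frame x ->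
  \sum_(i < n) ketbra (x i) = (n%:R / d%:R)%:M.
Proof.
move=> d_gt0 ux [c [_ [_ sum_c]]]; rewrite sum_c.
have := congr1 mxtrace sum_c; rewrite mxtrace_scalar raddf_sum /=.
under eq_bigr do rewrite mxtrace_ketbra ux.
rewrite sumr_const card_ord => ->.
by rewrite -[c *+ d]mulr_natr mulfK // pnatr_eq0 -lt0n.
Qed.

Section FrameMap.
Variables (C : numClosedFieldType) (d n : nat).
Variables (x y : 'I_n -> 'cV[C]_d).

Definition frame_map (M : 'M[C]_d) : 'M[C]_d :=
  \sum_i \tr (ketbra (y i) *m M) *: ketbra (x i).

Fact frame_map_is_linear : linear frame_map.
Proof.
move=> a M N; rewrite /frame_map scaler_sumr -big_split /=.
apply: eq_bigr => i _.
by rewrite mulmxDr -scalemxAr mxtraceD mxtraceZ scalerDl scalerA.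
Qed.

HB.instance Definition _ :=
  GRing.isLinear.Build C 'M[C]_d 'M[C]_d _ frame_map frame_map_is_linear.

Variables (alpha beta s : C).
Hypotheses (x_unit : forall i, unit_vec (x i)) (x_complete : info_complete x).
Hypothesis x_frame : \sum_i ketbra (x i) = s%:M.
Hypothesis overlap_diag : forall i, `|inner (x i) (y i)| ^+ 2 = alpha.
Hypothesis overlap_offdiag :
  forall i j, i != j -> `|inner (x i) (y j)| ^+ 2 = beta.

Lemma frame_map_ketbra k :
  frame_map (ketbra (x k))
    = (beta * s) *: 1%:M + (alpha - beta) *: ketbra (x k).
Proof.
rewrite /frame_map; under eq_bigr do rewrite mxtrace_mul_ketbra.
rewrite (bigD1 k) //= overlap_diag.
have -> : \sum_(i | i != k) `|inner (x k) (y i)| ^+ 2 *: ketbra (x i)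
    = beta *: (s%:M - ketbra (x k)).
  rewrite -x_frame [in RHS](bigD1 k) //= addrC addrK scaler_sumr.
  by apply: eq_bigr => i ik; rewrite overlap_offdiag // eq_sym.
by rewrite scalerBr scalemx1 -scale_scalar_mx addrCA scalerBl.
Qed.

Lemma frame_mapE M :
  frame_map M = (beta * s * \tr M) *: 1%:M + (alpha - beta) *: M.
Proof.
have [a ->] := x_complete M.
rewrite linear_sum; under eq_bigr do rewrite linearZ /= frame_map_ketbra.
rewrite raddf_sum /= mulr_sumr scaler_suml scaler_sumr -big_split /=.
apply: eq_bigr => k _; rewrite mxtraceZ mxtrace_ketbra x_unit mulr1.
by rewrite scalerDr !scalerA [a k * (beta * s)]mulrC [a k * _]mulrC.
Qed.

Lemma sum_ketbra_entries a a' b b' :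
  \sum_i ketbra (x i) a a' * ketbra (y i) b b'
    = beta * s * (b == b')%:R * (a == a')%:R
      + (alpha - beta) * ((a == b')%:R * (a' == b)%:R).
Proof.
transitivity (frame_map (delta_mx b' b) a a').
  rewrite summxE; apply: eq_bigr => i _.
  by rewrite [RHS]mxE mxtrace_mul_delta mulrC.
by rewrite frame_mapE mxtrace_delta !mxE -mulnb natrM.
Qed.

End FrameMap.

Lemma swap_mx_tens (C : numClosedFieldType) d (a b a' b' : 'I_d) :
  swap_mx C d (mxtens_index (a, b)) (mxtens_index (a', b'))
    = (a == b')%:R * (b == a')%:R.
Proof. by rewrite mxE !mxtens_indexK -natrM mulnb. Qed.

Lemma scalar_mx_tens (C : numClosedFieldType) d (c : C) (a b a' b' : 'I_d) :
  (c%:M : 'M_(d * d)) (mxtens_index (a, b)) (mxtens_index (a', b'))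
    = c * ((a == a')%:R * (b == b')%:R).
Proof.
rewrite mxE (inj_eq (can_inj (@mxtens_indexK _ _))) xpair_eqE.
by rewrite -natrM mulnb mulr_natr.
Qed.

Unset Implicit Arguments.

Theorem theorem2 (C : numClosedFieldType) (d : nat) (t : C)
    (x y : 'I_(d ^ 2) -> 'cV[C]_d) :
  (2 <= d)%N ->
  t \is Num.real ->
  - 1 / (d%:R ^+ 2 - 1) <= t -> t <= 1 / (d%:R + 1) ->
  (forall i, unit_vec (x i)) -> (forall i, unit_vec (y i)) ->
  tight_frame x -> tight_frame y ->
  info_complete x -> info_complete y ->
  (forall i j, i != j -> `|inner (x i) (y j)| ^+ 2 = (1 - t) / d%:R) ->
  (forall i, `|inner (x i) (y i)| ^+ 2 = (t * (d%:R ^+ 2 - 1) + 1) / d%:R) ->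
  (d%:R ^+ 2)^-1 *: \sum_(i < d ^ 2) (ketbra (x i) *t ketbra (y i))
    = (t / d%:R) *: swap_mx C d + ((1 - t) / d%:R ^+ 2) *: 1%:M.
Proof.
move=> d_ge2 _ _ _ x_unit _ x_frame _ x_complete _ overlap_off overlap_diag.
have d_gt0 : (0 < d)%N by apply: leq_trans d_ge2.
have d_neq0 : d%:R != 0 :> C by rewrite pnatr_eq0 -lt0n.
have x_sum := tight_frame_sum_ketbra d_gt0 x_unit x_frame.
have entries :=
  sum_ketbra_entries x_unit x_complete x_sum overlap_diag overlap_off.
apply/matrixP => A B.
case: (mxtens_indexP A) => a b; case: (mxtens_indexP B) => a' b'.
rewrite mxE summxE; under eq_bigr do rewrite tensmxE.
rewrite scalemx1 entries mxE [X in _ = X + _]mxE swap_mx_tens scalar_mx_tens.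
by rewrite natrX [a' == b]eq_sym; field.
Qed.
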